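(* Let $d\ge2$, $\delta\in[0,1/d)$, and let $N$ be a $\delta$-upper bounded matrix of dimension $d\times d$. Then $N$ is invertible and $$\|N^{-1}\|_\infty\le\frac{d-1}{1-d\delta}.$$
   Context: A $d\times d$ matrix $N$ is $\delta$-upper bounded if it is stochastic (non-negative entries, rows summing to $1$), $N_{i,i}\ge1-(d-1)\delta$ for all $i$, and $N_{i,j}\le\delta$ for all $i\ne j$. For a matrix $A$, $\|A\|_\infty=\sup_{x\ne0}\|Ax\|_\infty/\|x\|_\infty=\max_i\sum_j|A_{i,j}|$. *)

From HB Require Import structures.
From mathcomp Require Import all_boot all_order all_algebra.
Set Implicit Arguments. Unset Strict Implicit. Unset Printing Implicit Defensive.
Import Order.TTheory GRing.Theory Num.Theory.
Local Open Scope ring_scope.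

Definition stochastic (R : realFieldType) (d : nat) (N : 'M[R]_d) : Prop :=
  (forall i j, 0 <= N i j) /\ (forall i, \sum_j N i j = 1).

Definition delta_upper_bounded (R : realFieldType) (d : nat) (delta : R)
    (N : 'M[R]_d) : Prop :=
  [/\ stochastic N,
      (forall i, 1 - (d%:R - 1) * delta <= N i i)
    & (forall i j, i != j -> N i j <= delta)].

Definition inf_norm (R : realFieldType) (m n : nat) (A : 'M[R]_(m, n)) : R :=
  \big[Num.max/0]_(i < m) \sum_(j < n) `|A i j|.

From mathcomp Require Import all_boot all_order all_algebra.
From mathcomp Require Import ring lra.
Set Implicit Arguments. Unset Strict Implicit. Unset Printing Implicit Defensive.
Import Order.TTheory GRing.Theory Num.Theory.
Local Open Scope ring_scope.

(* With c = 1 - d delta, row i of N x can be written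
     (N x)_i = sum_j (N_ij - delta) (x_j - x_i) + delta (sum_j x_j) + c x_i,
   where every off-diagonal weight N_ij - delta is nonpositive.  At an index
   where x is maximal the first sum is nonnegative, at an index where it is
   minimal it is nonpositive; together with sum_j x_j >= max x + (d - 1) min x
   this yields c |x_j| <= (d - 1) max_i |(N x)_i|.  Such a lower bound makes N
   injective, and applied to the column N^-1 s, with s the sign pattern of a
   row of N^-1, it bounds the absolute row sums of N^-1 by (d - 1) / c. *)

Definition bounded_below (R : realFieldType) (d : nat) (A : 'M[R]_d) (k : R) :=
  forall (x : 'cV[R]_d) (m : R),
    (forall i, `|(A *m x) i 0| <= m) -> forall j, `|x j 0| <= k * m.

Lemma bounded_below_unitmx (R : realFieldType) (d : nat) (A : 'M[R]_d) (k : R) :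
  bounded_below A k -> A \in unitmx.
Proof.
move=> Abb; rewrite unitmxE unitfE -det_tr.
apply/negP => /det0P [v /eqP v_neq0 vAt0]; apply: v_neq0.
have Avt0 : A *m v^T = 0 by rewrite -[A]trmxK -trmx_mul vAt0 trmx0.
have Avt_le0 : forall i, `|(A *m v^T) i 0| <= 0.
  by move=> i; rewrite Avt0 mxE normr0.
apply/rowP => j; apply/eqP; rewrite mxE -normr_eq0 eq_le normr_ge0 andbT.
by have := Abb _ _ Avt_le0 j; rewrite mulr0 mxE.
Qed.

Lemma bounded_below_inf_norm_invmx (R : realFieldType) (d : nat)
    (A : 'M[R]_d) (k : R) :
  0 <= k -> bounded_below A k -> inf_norm (invmx A) <= k.
Proof.
move=> k_ge0 Abb; have A_unit := bounded_below_unitmx Abb.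
apply: bigmax_le => // i _.
pose sgn : 'cV[R]_d := \col_j (if 0 <= invmx A i j then 1 else -1).
have row_sum_sgn : \sum_j `|invmx A i j| = (invmx A *m sgn) i 0.
  rewrite mxE; apply: eq_bigr => j _; rewrite mxE.
  case: ifPn => [/ger0_norm -> | ]; first by rewrite mulr1.
  by rewrite -ltNge => /ltr0_norm ->; rewrite mulrN1.
have A_sgn_le1 : forall l, `|(A *m (invmx A *m sgn)) l 0| <= 1.
  move=> l; rewrite mulmxA mulmxV // mul1mx mxE.
  by case: ifP; rewrite ?normrN normr1.
rewrite row_sum_sgn (le_trans (ler_norm _)) //.
by have := Abb _ _ A_sgn_le1 i; rewrite mulr1.
Qed.

Lemma stochastic_mulmx_row (R : realFieldType) (d : nat) (N : 'M[R]_d)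
    (delta : R) (x : 'cV[R]_d) (i : 'I_d) :
  stochastic N ->
  (N *m x) i 0 = \sum_j (N i j - delta) * (x j 0 - x i 0)
                 + delta * \sum_j x j 0 + (1 - d%:R * delta) * x i 0.
Proof.
case=> _ row_sum1; rewrite mxE.
rewrite [in RHS](eq_bigr (fun j => N i j * x j 0 - delta * x j 0
                           - (N i j * x i 0 - delta * x i 0))); last first.
  by move=> j _; ring.
rewrite !sumrB -mulr_sumr -!mulr_suml row_sum1 sumr_const card_ord -mulr_natl.
ring.
Qed.

Lemma extremal_rows_ineq (R : realFieldType) (D c delta a b s m : R) :
  2 <= D -> 0 <= delta -> 0 < c -> 0 <= m ->
  c * a + delta * s <= m -> - m <= c * b + delta * s -> a + (D - 1) * b <= s ->
  c * a <= (D - 1) * m.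
Proof.
move=> D_ge2 delta_ge0 c_gt0 m_ge0 at_max at_min sum_ge.
have m_le : m <= (D - 1) * m by rewrite ler_peMl //; lra.
have [s_ge0 | s_lt0] := lerP 0 s.
  have : 0 <= delta * s by apply: mulr_ge0.
  lra.
(* For s < 0 the second inequality gives c b >= -m; feed this into the first,
   with delta s bounded from below through the third. *)
have cb_ge : - m <= c * b.
  have : delta * s <= 0 by apply: mulr_ge0_le0; lra.
  lra.
have delta_s_ge : delta * (a + (D - 1) * b) <= delta * s by apply: ler_wpM2l.
have weighted : (D - 1) * delta * (- m) <= (D - 1) * delta * (c * b).
  by apply: ler_wpM2l => //; apply: mulr_ge0 => //; lra.
have c_times_max : c * ((c + delta) * a + (D - 1) * delta * b) <= c * m.
  by rewrite ler_pM2l //; lra.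
have slack : 0 <= (D - 2) * (c * m).
  by apply: mulr_ge0; [lra | apply: mulr_ge0; lra].
rewrite -(ler_pM2l (_ : 0 < c + delta)); last by lra.
lra.
Qed.

Section DeltaUpperBounded.

Variables (R : realFieldType) (d : nat) (delta : R) (N : 'M[R]_d).
Let c := 1 - d%:R * delta.
Hypotheses (d_ge2 : (2 <= d)%N) (delta_ge0 : 0 <= delta) (c_gt0 : 0 < c)
  (N_ub : delta_upper_bounded delta N).

Lemma mulmx_row_ge_at_max (x : 'cV[R]_d) (i : 'I_d) :
  (forall j, x j 0 <= x i 0) ->
  c * x i 0 + delta * \sum_j x j 0 <= (N *m x) i 0.
Proof.
have [N_stoch _ N_offdiag] := N_ub; move=> x_max.
rewrite (stochastic_mulmx_row delta) // -/c.
suff : 0 <= \sum_j (N i j - delta) * (x j 0 - x i 0) by lra.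
apply: sumr_ge0 => j _; have [-> | j_neq_i] := eqVneq j i.
  by rewrite subrr mulr0.
by apply: mulr_le0; rewrite subr_le0 ?x_max // N_offdiag // eq_sym.
Qed.

Lemma mulmx_row_le_at_min (x : 'cV[R]_d) (i : 'I_d) :
  (forall j, x i 0 <= x j 0) ->
  (N *m x) i 0 <= c * x i 0 + delta * \sum_j x j 0.
Proof.
have [N_stoch _ N_offdiag] := N_ub; move=> x_min.
rewrite (stochastic_mulmx_row delta) // -/c.
suff : \sum_j (N i j - delta) * (x j 0 - x i 0) <= 0 by lra.
apply: sumr_le0 => j _; have [-> | j_neq_i] := eqVneq j i.
  by rewrite subrr mulr0.
apply: mulr_le0_ge0; first by rewrite subr_le0 N_offdiag // eq_sym.
by rewrite subr_ge0 x_min.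
Qed.

Lemma max_entry_bound (x : 'cV[R]_d) (m : R) (a : 'I_d) :
  (forall i, `|(N *m x) i 0| <= m) -> (forall j, x j 0 <= x a 0) ->
  c * x a 0 <= (d%:R - 1) * m.
Proof.
move=> Nx_le_m x_max.
have [b _ x_min] := @arg_minP _ _ _ a xpredT (fun j => x j 0) isT.
set s := \sum_j x j 0; set xa := x a 0; set xb := x _ 0 in x_min *.
have m_ge0 : 0 <= m := le_trans (normr_ge0 _) (Nx_le_m a).
have at_max : c * xa + delta * s <= m.
  apply: le_trans (mulmx_row_ge_at_max x_max) _.
  exact: le_trans (ler_norm _) (Nx_le_m a).
have at_min : - m <= c * xb + delta * s.
  apply: le_trans (mulmx_row_le_at_min (fun j => x_min j isT)).
  by have /ler_normlP[] := Nx_le_m b; rewrite lerNl.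
have sum_ge : xa + (d%:R - 1) * xb <= s.
  have : xa - xb <= \sum_j (x j 0 - xb).
    rewrite (bigD1 a) //= lerDl.
    by apply: sumr_ge0 => j _; rewrite subr_ge0 x_min.
  by rewrite sumrB sumr_const card_ord -mulr_natl -/s; lra.
have D_ge2 : 2 <= d%:R :> R by rewrite ler_nat.
exact: extremal_rows_ineq D_ge2 delta_ge0 c_gt0 m_ge0 at_max at_min sum_ge.
Qed.

Lemma upper_bounded_bounded_below : bounded_below N ((d%:R - 1) / c).
Proof.
move=> x m Nx_le_m j.
have Nnx_le_m : forall i, `|(N *m - x) i 0| <= m.
  by move=> i; rewrite mulmxN mxE normrN.
have [a _ x_max] := @arg_maxP _ _ _ j xpredT (fun k => x k 0) isT.
have [b _ nx_max] := @arg_maxP _ _ _ j xpredT (fun k => (- x) k 0) isT.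
have := max_entry_bound Nx_le_m (fun k => x_max k isT).
have := max_entry_bound Nnx_le_m (fun k => nx_max k isT).
have := ler_wpM2l (ltW c_gt0) (x_max j isT).
have := ler_wpM2l (ltW c_gt0) (nx_max j isT).
rewrite mulrAC ler_pdivlMr // !mxE.
by case: (lerP 0 (x j 0)) => [/ger0_norm -> | /ltr0_norm ->]; lra.
Qed.

End DeltaUpperBounded.

Theorem corollary14 (R : realFieldType) (d : nat) (delta : R) (N : 'M[R]_d) :
  (2 <= d)%N -> 0 <= delta -> delta < 1 / d%:R ->
  delta_upper_bounded delta N ->
  N \in unitmx /\
  inf_norm (invmx N) <= (d%:R - 1) / (1 - d%:R * delta).
Proof.
move=> d_ge2 delta_ge0 delta_lt N_ub.
have d_gt0 : 0 < d%:R :> R by rewrite ltr0n (ltn_trans _ d_ge2).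
have c_gt0 : 0 < 1 - d%:R * delta.
  by rewrite subr_gt0 -ltr_pdivlMl // mulr1 -[d%:R^-1]mul1r.
have N_bb := upper_bounded_bounded_below d_ge2 delta_ge0 c_gt0 N_ub.
split; first exact: bounded_below_unitmx N_bb.
apply: bounded_below_inf_norm_invmx N_bb.
by apply: divr_ge0; [rewrite subr_ge0 ler1n (ltnW d_ge2) | exact: ltW].
Qed.
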